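(* Let $n\ge 6$ and let $\mathfrak g$ be an $n$-dimensional filiform Lie algebra with associated triple $(n-2,n-2,n)$. Then there exist an adapted basis $\{e_1,\dots,e_n\}$ of $\mathfrak g$ and complex numbers $\alpha,\gamma,\beta$ with $\alpha\neq0$ such that the nonzero brackets $[e_a,e_b]$, $a<b$, are exactly given by $[e_1,e_h]=e_{h-1}$ ($3\le h\le n$), $[e_{n-2},e_{n-1}]=\alpha e_2$, $[e_{n-2},e_n]=\alpha e_3+\gamma e_2$, $[e_{n-1},e_n]=\alpha e_4+\gamma e_3+\beta e_2$, all other brackets of basis elements with $a<b$ being zero. Conversely, for every $\alpha\in\mathbb C\setminus\{0\}$ and $\gamma,\beta\in\mathbb C$, these brackets define a Lie algebra which is filiform with associated triple $(n-2,n-2,n)$ (i.e. the Jacobi identity imposes no polynomial relation on $\alpha,\gamma,\beta$, and the only open condition is $\alpha\neq0$, equivalent to $[C^2\mathfrak g,C^3\mathfrak g]\neq\{0\}$).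
   Context: All Lie algebras are over $\mathbb C$; $C^1\mathfrak g=\mathfrak g$, $C^k\mathfrak g=[C^{k-1}\mathfrak g,\mathfrak g]$. A Lie algebra is filiform if $\dim\mathfrak g=n\ge2$ and $\dim C^k\mathfrak g=n-k$ for $2\le k\le n$. An adapted basis of a filiform $\mathfrak g$ is a basis $\{e_1,\dots,e_n\}$ with $[e_1,e_h]=e_{h-1}$ ($3\le h\le n$), $[e_2,e_h]=0$ ($1\le h\le n$), $[e_3,e_h]=0$ ($2\le h\le n$). For a non-model filiform $\mathfrak g$ (not isomorphic to the algebra with $[e_1,e_h]=e_{h-1}$ and other brackets zero), $z_1=\min\{k\ge4:[e_k,e_n]\ne0\}$ and $z_2=\min\{k\ge4:[e_k,e_{k+1}]\ne0\}$ computed in any adapted basis are isomorphism invariants; $(z_1,z_2,n)$ is the associated triple. *)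

(* Lie algebras over C := R[i] for an arbitrary realType R
   (R[i] = complex numbers over R; for R the real numbers this is C). *)
From HB Require Import structures.
From mathcomp Require Import all_boot all_order all_algebra reals.
From mathcomp.real_closed Require Export complex.
Set Implicit Arguments. Unset Strict Implicit. Unset Printing Implicit Defensive.
Import GRing.Theory.
Local Open Scope ring_scope.

Section Lie.
Variables (K : fieldType) (V : vectType K).

Definition is_lie_bracket (br : V -> V -> V) : Prop :=
  [/\ forall (a : K) x y z, br (a *: x + y) z = a *: br x z + br y z,
      forall (a : K) x y z, br x (a *: y + z) = a *: br x y + br x z,
      forall x, br x x = 0 &
      forall x y z, br x (br y z) + br y (br z x) + br z (br x y) = 0].

Definition bracket_space (br : V -> V -> V) (U W : {vspace V}) : {vspace V} :=
  <<[seq br u w | u <- (vbasis U : seq V), w <- (vbasis W : seq V)]>>%VS.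

(* lower central series: lcs br 1 = V, lcs br (k+1) = [lcs br k, V]
   (lcs br 0 is also V, by convention; it is never used) *)
Fixpoint lcs (br : V -> V -> V) (k : nat) : {vspace V} :=
  match k with
  | 0 => fullv
  | 1 => fullv
  | k'.+1 => bracket_space br (lcs br k') fullv
  end.

Definition filiform (br : V -> V -> V) (n : nat) : Prop :=
  [/\ (2 <= n)%N, \dim (fullv : {vspace V}) = n &
      forall k, (2 <= k <= n)%N -> \dim (lcs br k) = (n - k)%N].

Definition is_basis_n (n : nat) (e : nat -> V) : Prop :=
  basis_of fullv [seq e i | i <- iota 1 n].

Definition adapted_basis (br : V -> V -> V) (n : nat) (e : nat -> V) : Prop :=
  [/\ is_basis_n n e,
      forall h, (3 <= h <= n)%N -> br (e 1%N) (e h) = e h.-1,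
      forall h, (1 <= h <= n)%N -> br (e 2%N) (e h) = 0 &
      forall h, (2 <= h <= n)%N -> br (e 3%N) (e h) = 0].

Definition is_model (br : V -> V -> V) (n : nat) : Prop :=
  exists e : nat -> V, is_basis_n n e /\
    forall a b, (1 <= a)%N -> (a < b)%N -> (b <= n)%N ->
      br (e a) (e b) = if (a == 1%N) && (3 <= b)%N then e b.-1 else 0.

Definition is_least (P : nat -> Prop) (z : nat) : Prop :=
  P z /\ forall k, (k < z)%N -> ~ P k.

Definition z1_of (br : V -> V -> V) (n : nat) (e : nat -> V) (z : nat) :=
  is_least (fun k => (4 <= k <= n)%N /\ br (e k) (e n) <> 0) z.

Definition z2_of (br : V -> V -> V) (n : nat) (e : nat -> V) (z : nat) :=
  is_least (fun k => (4 <= k)%N /\ (k < n)%N /\ br (e k) (e k.+1) <> 0) z.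

(* Since z1, z2 are isomorphism invariants (independent
   of the adapted basis), it suffices to compute them in one adapted basis. *)
Definition has_triple (br : V -> V -> V) (z1 z2 n : nat) : Prop :=
  [/\ is_lie_bracket br, filiform br n, ~ is_model br n &
      exists e, [/\ adapted_basis br n e, z1_of br n e z1 & z2_of br n e z2]].

End Lie.

Definition table (K : fieldType) (V : vectType K) (n : nat) (e : nat -> V)
    (al ga be : K) (a b : nat) : V :=
  if (a == 1%N) && (3 <= b)%N then e b.-1
  else if (a == n - 2)%N && (b == n - 1)%N then al *: e 2%N
  else if (a == n - 2)%N && (b == n)%N then al *: e 3%N + ga *: e 2%N
  else if (a == n - 1)%N && (b == n)%N then al *: e 4%N + ga *: e 3%N + be *: e 2%N
  else 0.

(* In an adapted basis, [ad e_1] is a derivation with [ad e_1 e_h = e_(h-1)].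
   Starting from [z1 = n - 2], downward induction along [ad e_1] kills every
   bracket [e_i, e_j] with 4 <= i < j except the three top ones
   [e_(n-2), e_(n-1)], [e_(n-2), e_n], [e_(n-1), e_n], which form a chain under
   [ad e_1] ending in 0.  Hence [e_(n-1), e_n] lies in ker (ad e_1)^3 =
   <e_1, ..., e_4>, its e_1-component vanishes by the Jacobi identity for
   e_(n-2), e_(n-1), e_n, and its coefficients are beta, gamma, alpha; alpha <> 0
   because z2 = n - 2.
   Conversely, the table is realised on K^n by the bracket whose h-th coordinate
   is the (1, h+1) minor of the two arguments plus combinations of the three
   minors in the last three coordinates; Jacobi is a polynomial identity checked
   coordinatewise.  There C^k = <e_2, ..., e_(n-k+1)>, and
   [[e_1, e_(n-1)], [e_1, e_n]] = alpha e_2 <> 0 excludes the model algebra,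
   whose derived algebra is abelian. *)

From HB Require Import structures.
From mathcomp Require Import all_boot all_order all_algebra reals.
From mathcomp.real_closed Require Import complex.
From mathcomp Require Import zify ring.
Set Implicit Arguments. Unset Strict Implicit. Unset Printing Implicit Defensive.
Import GRing.Theory.
Local Open Scope ring_scope.

Section LieBracket.
Variables (K : fieldType) (V : vectType K) (br : V -> V -> V).
Hypothesis brL : is_lie_bracket br.

Lemma brDl x y z : br (x + y) z = br x z + br y z.
Proof. by case: brL => h _ _ _; have := h 1 x y z; rewrite !scale1r. Qed.

Lemma brDr x y z : br z (x + y) = br z x + br z y.
Proof. by case: brL => _ h _ _; have := h 1 z x y; rewrite !scale1r. Qed.

Lemma br0l y : br 0 y = 0.
Proof. by apply: (@addIr _ (br 0 y)); rewrite -brDl !add0r. Qed.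

Lemma br0r y : br y 0 = 0.
Proof. by apply: (@addIr _ (br y 0)); rewrite -brDr !add0r. Qed.

Lemma brZl a x z : br (a *: x) z = a *: br x z.
Proof. by case: brL => h _ _ _; rewrite -[a *: x]addr0 h br0l addr0. Qed.

Lemma brZr a x z : br z (a *: x) = a *: br z x.
Proof. by case: brL => _ h _ _; rewrite -[a *: x]addr0 h br0r addr0. Qed.

Lemma brNr x z : br z (- x) = - br z x.
Proof. by rewrite -scaleN1r brZr scaleN1r. Qed.

Lemma brxx x : br x x = 0.
Proof. by case: brL. Qed.

Lemma brC x y : br x y = - br y x.
Proof.
apply/eqP; rewrite -addr_eq0.
by have := brxx (x + y); rewrite brDl !brDr !brxx add0r addr0 => ->.
Qed.

Lemma brJ x y z : br x (br y z) + br y (br z x) + br z (br x y) = 0.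
Proof. by case: brL. Qed.

Lemma br_suml I (r : seq I) (P : pred I) F y :
  br (\sum_(i <- r | P i) F i) y = \sum_(i <- r | P i) br (F i) y.
Proof. exact: (big_morph (br^~ y) (fun a b => brDl a b y) (br0l y)). Qed.

Lemma br_sumr I (r : seq I) (P : pred I) F y :
  br y (\sum_(i <- r | P i) F i) = \sum_(i <- r | P i) br y (F i).
Proof. exact: (big_morph (br y) (fun a b => brDr a b y) (br0r y)). Qed.

Lemma mem_bracket_span (X Y : seq V) (S : {vspace V}) :
  (forall x y, x \in X -> y \in Y -> br x y \in S) ->
  forall u w, u \in <<X>>%VS -> w \in <<Y>>%VS -> br u w \in S.
Proof.
move=> hXY u w /(coord_span (X := in_tuple X)) -> /(coord_span (X := in_tuple Y)) ->.
rewrite br_suml; apply: memv_suml => i _; rewrite brZl; apply: memvZ.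
rewrite br_sumr; apply: memv_suml => j _; rewrite brZr; apply: memvZ.
by apply: hXY; apply: mem_nth.
Qed.

Lemma bracket_space_sub (X Y : seq V) (S : {vspace V}) :
  (forall x y, x \in X -> y \in Y -> br x y \in S) ->
  (bracket_space br <<X>> <<Y>> <= S)%VS.
Proof.
move=> hXY; apply/span_subvP => z /allpairsP [[u w] [/= hu hw ->]].
by apply: (mem_bracket_span hXY); apply: vbasis_mem.
Qed.

Lemma mem_bracket_space (U W : {vspace V}) u w :
  u \in U -> w \in W -> br u w \in bracket_space br U W.
Proof.
rewrite -{1}(span_basis (vbasisP U)) -{1}(span_basis (vbasisP W)).
by apply: mem_bracket_span => x y hx hy; apply/memv_span/allpairs_f.
Qed.

End LieBracket.

Section BasisN.
Variables (K : fieldType) (V : vectType K) (n : nat) (e : nat -> V).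
Hypothesis e_basis : is_basis_n n e.

Local Notation s := [seq e i | i <- iota 1 n].

Lemma mem_basis_n h : (1 <= h <= n)%N -> e h \in s.
Proof. by move=> hh; apply: map_f; rewrite mem_iota; lia. Qed.

Lemma basis_n_neq0 h : (1 <= h <= n)%N -> e h != 0.
Proof. by move=> hh; apply: (basis_not0 e_basis); apply: mem_basis_n. Qed.

Lemma basis_n_span : <<s>>%VS = fullv.
Proof. exact: span_basis e_basis. Qed.

Lemma basis_n_decomp v : exists x : nat -> K, v = \sum_(h <- iota 1 n) x h *: e h.
Proof.
have hv : v \in <<s>>%VS by rewrite basis_n_span memvf.
have [k hk _] := free_span (basis_free e_basis) hv.
by exists (fun h => k (e h)); rewrite hk big_map.
Qed.

Lemma index_basis_n h : (1 <= h <= n)%N -> index (e h) s = h.-1.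
Proof.
move=> hh; have <- : nth 0 s h.-1 = e h.
  by rewrite (nth_map 0%N) ?size_iota ?nth_iota; [congr e | |]; lia.
by rewrite index_uniq ?(free_uniq (basis_free e_basis)) // size_map size_iota; lia.
Qed.

Lemma basis_n_coef0 (x : nat -> K) : \sum_(h <- iota 1 n) x h *: e h = 0 ->
  forall h, (1 <= h <= n)%N -> x h = 0.
Proof.
move=> x0 h hh; have [k0 _ coef_uniq] := free_span (basis_free e_basis) (mem0v _).
pose k v := x (index v s).+1.
have sum_k : 0 = \sum_(v <- s) k v *: v.
  rewrite big_map -{1}x0; apply: eq_big_seq => j; rewrite mem_iota => hj.
  by rewrite /k index_basis_n ?prednK //; lia.
have zero0 : 0 = \sum_(v <- s) (0 : K) *: v by rewrite big1 // => v _; rewrite scale0r.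
have := coef_uniq _ sum_k (e h) (mem_basis_n hh).
rewrite -(coef_uniq _ zero0 (e h) (mem_basis_n hh)) /k index_basis_n ?prednK //; lia.
Qed.

End BasisN.

Section AdaptedBasis.
Variables (K : fieldType) (V : vectType K) (br : V -> V -> V) (n : nat) (e : nat -> V).
Hypothesis brL : is_lie_bracket br.
Hypothesis n_ge6 : (6 <= n)%N.
Hypothesis e_basis : is_basis_n n e.
Hypothesis br1e : forall h, (3 <= h <= n)%N -> br (e 1%N) (e h) = e h.-1.
Hypothesis br2e : forall h, (1 <= h <= n)%N -> br (e 2%N) (e h) = 0.
Hypothesis br3e : forall h, (2 <= h <= n)%N -> br (e 3%N) (e h) = 0.
Hypothesis brn_low : forall k, (4 <= k)%N -> (k < n - 2)%N -> br (e k) (e n) = 0.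

Local Notation c i j := (br (e i) (e j)).

Lemma br1e2 : c 1 2 = 0.
Proof. by rewrite (brC brL) br2e ?oppr0 //; lia. Qed.

Lemma br1e_br i j : (3 <= i <= n)%N -> (3 <= j <= n)%N ->
  br (e 1%N) (c i j) = c i j.-1 + c i.-1 j.
Proof.
move=> hi hj; have := brJ brL (e 1%N) (e i) (e j).
rewrite (brC brL (e j) (e 1%N)) !br1e // (brNr brL) (brC brL (e j) (e i.-1)).
by move=> J; apply/eqP; rewrite -subr_eq0 opprD addrA J.
Qed.

(* Downward induction on [j]: [ad e_1] sends [[e_i, e_(j+1)]] to
   [[e_i, e_j] + [e_(i-1), e_(j+1)]], and the base case [j = n] is the
   hypothesis [z1 >= n - 2]. *)
Lemma br_vanish i j : (4 <= i)%N -> (i < j <= n)%N -> (i + j <= 2 * n - 3)%N ->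
  ~ (i = n - 2 /\ j = n - 1)%N -> c i j = 0.
Proof.
suff vanish k : forall i j, (j + k = n)%N -> (4 <= i)%N -> (i < j)%N ->
    (i + j <= 2 * n - 3)%N -> ~ (i = n - 2 /\ j = n - 1)%N -> c i j = 0.
  by move=> hi hj; apply: (vanish (n - j)%N) => //; lia.
elim: k => [|k IH] {}i {}j hk hi hij hs hne.
  by rewrite addn0 in hk; subst j; apply: brn_low => //; lia.
have cij1 : c i j.+1 = 0 by apply: IH => //; lia.
have ci1j1 : c i.-1 j.+1 = 0.
  have [hi4|->] : (4 < i)%N \/ i = 4%N by lia.
    by apply: IH => //; lia.
  by apply: br3e; lia.
by have := br1e_br (i := i) (j := j.+1); rewrite cij1 ci1j1 addr0 (br0r brL) => <- //; lia.
Qed.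

Lemma br_n3_n : c (n - 3) n = 0.
Proof.
have [n6|n6] : (6 < n)%N \/ n = 6%N by lia.
  by apply: brn_low; lia.
by rewrite (_ : n - 3 = 3)%N ?br3e //; lia.
Qed.

Lemma br_n3_n1 : c (n - 3) (n - 1) = 0.
Proof.
have [n6|n6] : (6 < n)%N \/ n = 6%N by lia.
  by apply: br_vanish; lia.
by rewrite (_ : n - 3 = 3)%N ?br3e //; lia.
Qed.

Lemma br1e_top : br (e 1%N) (c (n - 1) n) = c (n - 2) n.
Proof.
rewrite br1e_br; try lia.
have -> : n.-1 = (n - 1)%N by lia.
by rewrite (brxx brL) add0r; congr (br (e _) (e _)); lia.
Qed.

Lemma br1e_mid : br (e 1%N) (c (n - 2) n) = c (n - 2) (n - 1).
Proof.
rewrite br1e_br; try lia.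
have -> : (n - 2).-1 = (n - 3)%N by lia.
have -> : n.-1 = (n - 1)%N by lia.
by rewrite br_n3_n addr0.
Qed.

Lemma br1e_low : br (e 1%N) (c (n - 2) (n - 1)) = 0.
Proof.
rewrite br1e_br; try lia.
have -> : (n - 2).-1 = (n - 3)%N by lia.
have -> : (n - 1).-1 = (n - 2)%N by lia.
by rewrite br_n3_n1 addr0 (brxx brL).
Qed.

Definition shift_coef (x : nat -> K) h := if (2 <= h < n)%N then x h.+1 else 0.

Lemma br1e_sum x : br (e 1%N) (\sum_(h <- iota 1 n) x h *: e h) =
  \sum_(h <- iota 1 n) shift_coef x h *: e h.
Proof.
have n2 : (2 <= n)%N by lia.
have iota_head : iota 1 n = 1%N :: 2%N :: iota 3 (n - 2).
  by rewrite -[in LHS](subnKC n2) iotaD.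
have iota_last : iota 1 n = 1%N :: iota 2 (n - 2) ++ [:: n].
  have n_split : (1 + (n - 2) + 1 = n)%N by lia.
  rewrite -[in LHS]n_split !iotaD /=; congr (_ :: _ ++ [:: _]); lia.
rewrite (br_sumr brL) {1}iota_head !big_cons !(brZr brL) (brxx brL) br1e2 !scaler0 !add0r.
rewrite iota_last big_cons big_cat big_cons big_nil /shift_coef /= ltnn andbF.
rewrite !scale0r !addr0 add0r (iotaDl 1 2) big_map.
apply: eq_big_seq => h; rewrite mem_iota => hh.
by rewrite (brZr brL) br1e ?ifT //; lia.
Qed.

Lemma top_brackets : exists x : nat -> K,
  [/\ c (n - 1) n = x 2%N *: e 2%N + x 3%N *: e 3%N + x 4%N *: e 4%N,
      c (n - 2) n = x 3%N *: e 2%N + x 4%N *: e 3%N &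
      c (n - 2) (n - 1) = x 4%N *: e 2%N].
Proof.
have [x x_top] := basis_n_decomp e_basis (c (n - 1) n).
have ad3_top : br (e 1%N) (br (e 1%N) (br (e 1%N) (c (n - 1) n))) = 0.
  by rewrite br1e_top br1e_mid br1e_low.
rewrite x_top !br1e_sum in ad3_top.
have x_high h : (5 <= h <= n)%N -> x h = 0.
  move=> hh; rewrite -(basis_n_coef0 e_basis ad3_top (h := h - 3)); last lia.
  by rewrite /shift_coef !ifT; [congr x | ..]; lia.
have n4 : (4 <= n)%N by lia.
have top4 : c (n - 1) n =
    x 1%N *: e 1%N + x 2%N *: e 2%N + x 3%N *: e 3%N + x 4%N *: e 4%N.
  rewrite x_top -[in iota 1 n](subnKC n4) iotaD big_cat /=.
  rewrite [X in _ + X]big1_seq ?addr0; last first.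
    by move=> h /andP[_]; rewrite mem_iota => hh; rewrite x_high ?scale0r //; lia.
  by rewrite !big_cons big_nil addr0 !addrA.
have mid : c (n - 2) n = x 3%N *: e 2%N + x 4%N *: e 3%N.
  rewrite -br1e_top top4 !(brDr brL) !(brZr brL) (brxx brL) br1e2 !br1e //=; try lia.
  by rewrite !scaler0 !add0r.
have low : c (n - 2) (n - 1) = x 4%N *: e 2%N.
  rewrite -br1e_mid mid !(brDr brL) !(brZr brL) br1e2 !br1e //=; try lia.
  by rewrite scaler0 add0r.
have c_n2_4 : c (n - 2) 4 = 0.
  have [n6|n6] : (6 < n)%N \/ n = 6%N by lia.
    by rewrite (brC brL) br_vanish ?oppr0 //; lia.
  by rewrite (_ : n - 2 = 4)%N ?(brxx brL) //; lia.
(* the e_(n-3) component of the Jacobi identity for e_(n-2), e_(n-1), e_n *)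
have x1 : x 1%N = 0.
  have := brJ brL (e (n - 2)) (e (n - 1)) (e n).
  rewrite top4 (brC brL (e n)) mid low !(brNr brL) !(brDr brL) !(brZr brL).
  rewrite (brC brL (e (n - 2)) (e 1%N)) br1e; last lia.
  rewrite (brC brL _ (e 2%N)) br2e; last lia.
  rewrite (brC brL (e (n - 2)) (e 3%N)) br3e; last lia.
  rewrite (brC brL (e (n - 1)) (e 2%N)) br2e; last lia.
  rewrite (brC brL (e (n - 1)) (e 3%N)) br3e; last lia.
  rewrite (brC brL (e n) (e 2%N)) br2e; last lia.
  rewrite c_n2_4 ?oppr0 ?scaler0 ?addr0 ?subr0 scalerN => /eqP.
  rewrite oppr_eq0 scaler_eq0 (negPf (basis_n_neq0 e_basis _)) ?orbF; last lia.
  by move/eqP.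
by exists x; split => //; rewrite top4 x1 scale0r add0r.
Qed.

Lemma adapted_table : c (n - 2) (n - 1) != 0 ->
  exists al ga be, al != 0 /\ forall a b, (1 <= a)%N -> (a < b)%N -> (b <= n)%N ->
    c a b = table n e al ga be a b.
Proof.
move=> top_neq0; have [x [top mid low]] := top_brackets.
exists (x 4%N), (x 3%N), (x 2%N); split.
  by apply: contraNneq top_neq0 => x4; rewrite low x4 scale0r.
move=> a b ha hab hb; rewrite /table.
have [a_le3|a_ge4] := ltnP a 4.
  have [->|a1] := eqVneq a 1%N.
    rewrite /=; case: ifP => hb3; first by rewrite br1e //; lia.
    by rewrite (_ : b = 2%N) ?br1e2 ?ifF //; lia.
  rewrite /= !ifF; try lia.
  have [->|->] : a = 2%N \/ a = 3%N by lia.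
    by rewrite br2e //; lia.
  by rewrite br3e //; lia.
rewrite ifF; last lia.
case: ifP => [?|not_low]; first by have [-> ->] : a = (n - 2)%N /\ b = (n - 1)%N by lia.
case: ifP => [?|not_mid].
  have [-> ->] : a = (n - 2)%N /\ b = n by lia.
  by rewrite mid addrC.
case: ifP => [?|not_top].
  have [-> ->] : a = (n - 1)%N /\ b = n by lia.
  by rewrite top addrC [x 2%N *: _ + _]addrC addrA.
by apply: br_vanish; lia.
Qed.

End AdaptedBasis.

Section ModelFiliform.
Variables (K : fieldType) (V : vectType K) (br : V -> V -> V) (n : nat).
Hypothesis brL : is_lie_bracket br.

(* Brackets lie in <<f_2, ..., f_(n-1)>>, an abelian subalgebra. *)
Lemma is_model_br_br_eq0 : is_model br n -> forall u v w x, br (br u v) (br w x) = 0.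
Proof.
case=> f [f_basis f_br] u v w x.
pose T := <<[seq f i | i <- iota 2 (n - 1)]>>%VS.
have f_full : fullv = <<[seq f i | i <- iota 1 n]>>%VS by rewrite (span_basis f_basis).
have br_T y z : br y z \in T.
  apply: (mem_bracket_span brL (X := [seq f i | i <- iota 1 n])
                               (Y := [seq f i | i <- iota 1 n])); rewrite -?f_full ?memvf //.
  move=> _ _ /mapP [a ha ->] /mapP [b hb ->]; move: ha hb; rewrite !mem_iota => ha hb.
  have f_T c : (2 <= c <= n - 1)%N -> f c \in T.
    by move=> hc; apply: memv_span; apply: map_f; rewrite mem_iota; lia.
  case: (ltngtP a b) => hab.
  - by rewrite f_br; try lia; case: ifP => hc; rewrite ?mem0v ?f_T //; lia.
  - by rewrite (brC brL) memvN f_br; try lia; case: ifP => hc; rewrite ?mem0v ?f_T //; lia.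
  - by rewrite hab (brxx brL) mem0v.
apply/eqP; rewrite -memv0; move: (br_T u v) (br_T w x); apply: (mem_bracket_span brL).
move=> _ _ /mapP [a ha ->] /mapP [b hb ->]; move: ha hb; rewrite !mem_iota => ha hb.
case: (ltngtP a b) => hab.
- by rewrite f_br; try lia; rewrite ifF ?mem0v //; lia.
- by rewrite (brC brL) memvN f_br; try lia; rewrite ifF ?mem0v //; lia.
- by rewrite hab (brxx brL) mem0v.
Qed.

End ModelFiliform.

Section TableAlgebra.
Variables (K : fieldType) (V : vectType K) (br : V -> V -> V) (n : nat) (e : nat -> V)
  (al ga be : K).
Hypothesis brL : is_lie_bracket br.
Hypothesis n_ge6 : (6 <= n)%N.
Hypothesis e_basis : is_basis_n n e.
Hypothesis br_table : forall a b, (1 <= a)%N -> (a < b)%N -> (b <= n)%N ->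
  br (e a) (e b) = table n e al ga be a b.
Hypothesis al_neq0 : al != 0.

Local Notation c i j := (br (e i) (e j)).

Ltac table_cases := rewrite /table; repeat (case: ifP => ?); try (exfalso; lia).

Lemma br_table_all a b : (1 <= a <= n)%N -> (1 <= b <= n)%N ->
  c a b = if (a < b)%N then table n e al ga be a b
          else if (b < a)%N then - table n e al ga be b a else 0.
Proof.
move=> ha hb; case: ltngtP => hab.
- by apply: br_table => //; lia.
- by rewrite (brC brL) br_table //; lia.
- by rewrite hab (brxx brL).
Qed.

Lemma br1e_table h : (3 <= h <= n)%N -> c 1 h = e h.-1.
Proof. by move=> hh; rewrite br_table; try lia; rewrite /table ifT //; lia. Qed.

Lemma br1e2_table : c 1 2 = 0.
Proof. by rewrite br_table; try lia; table_cases. Qed.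

Definition span_e2 m := <<[seq e i | i <- iota 2 (m - 1)]>>%VS.

Lemma e_span_e2 m j : (2 <= j <= m)%N -> e j \in span_e2 m.
Proof. by move=> hj; apply: memv_span; apply: map_f; rewrite mem_iota; lia. Qed.

Lemma br_span_e2 m h k : (1 <= h <= m)%N -> (m <= n)%N -> (1 <= k <= n)%N ->
  (2 <= h)%N || (m == n) -> c h k \in span_e2 (m - 1).
Proof.
move=> hh hm hk hh2; rewrite br_table_all; try lia.
by table_cases; rewrite ?memvN; repeat first
  [ apply: memvD | apply: memvZ | apply: mem0v | apply: e_span_e2; lia ].
Qed.

Lemma e_bracket_space (U : {vspace V}) j : (2 <= j <= n - 1)%N -> e j.+1 \in U ->
  e j \in bracket_space br U fullv.
Proof.
move=> hj hU; have -> : e j = br (e j.+1) (- e 1%N).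
  by rewrite (brNr brL) (brC brL) opprK br1e_table //; lia.
by apply: mem_bracket_space; rewrite ?memvf.
Qed.

Lemma bracket_span_e2 m : (2 <= m <= n)%N ->
  bracket_space br (span_e2 m) fullv = span_e2 (m - 1).
Proof.
move=> hm; apply/eqP; rewrite eqEsubv; apply/andP; split.
  rewrite -(basis_n_span e_basis); apply: (bracket_space_sub brL).
  move=> _ _ /mapP [h hh ->] /mapP [k hk ->]; move: hh hk; rewrite !mem_iota => hh hk.
  by apply: br_span_e2; lia.
apply/span_subvP => _ /mapP [j hj ->]; move: hj; rewrite mem_iota => hj.
by apply: e_bracket_space; [| apply: e_span_e2]; lia.
Qed.

Lemma bracket_full_table : bracket_space br fullv fullv = span_e2 (n - 1).
Proof.
apply/eqP; rewrite eqEsubv; apply/andP; split.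
  rewrite -(basis_n_span e_basis); apply: (bracket_space_sub brL).
  move=> _ _ /mapP [h hh ->] /mapP [k hk ->]; move: hh hk; rewrite !mem_iota => hh hk.
  by apply: br_span_e2; rewrite ?eqxx ?orbT; lia.
apply/span_subvP => _ /mapP [j hj ->]; move: hj; rewrite mem_iota => hj.
by apply: e_bracket_space; rewrite ?memvf; lia.
Qed.

Lemma dim_span_e2 m : (1 <= m <= n)%N -> \dim (span_e2 m) = (m - 1)%N.
Proof.
move=> hm; have : free [seq e i | i <- iota 1 (1 + (m - 1) + (n - m))].
  by rewrite (_ : 1 + (m - 1) + (n - m) = n)%N; [exact: (basis_free e_basis) | lia].
rewrite !iotaD !map_cat -catA => /catr_free /catl_free /eqnP.
by rewrite size_map size_iota.
Qed.

Lemma lcs_table k : (2 <= k <= n)%N -> lcs br k = span_e2 (n - k + 1).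
Proof.
elim: k => [|[|[|k]] IH] hk; try lia.
  by rewrite /= bracket_full_table (_ : n - 2 + 1 = n - 1)%N //; lia.
rewrite /= -/(lcs br k.+2) IH ?bracket_span_e2; try lia.
by congr span_e2; lia.
Qed.

Lemma table_filiform : filiform br n.
Proof.
split; first lia.
  by rewrite (size_basis (X := in_tuple [seq e i | i <- iota 1 n]) e_basis) size_map size_iota.
by move=> k hk; rewrite lcs_table // dim_span_e2; lia.
Qed.

(* [[e_1, e_(n-1)], [e_1, e_n]] = [e_(n-2), e_(n-1)] = al e_2 *)
Lemma table_not_model : ~ is_model br n.
Proof.
move=> /(is_model_br_br_eq0 brL) /(_ (e 1%N) (e (n - 1)) (e 1%N) (e n)).
rewrite !br1e_table; try lia.
have -> : (n - 1).-1 = (n - 2)%N by lia.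
have -> : n.-1 = (n - 1)%N by lia.
rewrite br_table; try lia.
rewrite /table ifF ?ifT; try lia.
by move/eqP; rewrite scaler_eq0 (negPf al_neq0) (negPf (basis_n_neq0 e_basis _)) //; lia.
Qed.

Lemma table_adapted : adapted_basis br n e.
Proof.
split => //; first exact: br1e_table.
  by move=> h hh; rewrite br_table_all; try lia; table_cases; rewrite ?oppr0.
by move=> h hh; rewrite br_table_all; try lia; table_cases; rewrite ?oppr0.
Qed.

Lemma table_low_neq0 : al *: e 2%N != 0.
Proof. by rewrite scaler_eq0 (negPf al_neq0) (negPf (basis_n_neq0 e_basis _)) //; lia. Qed.

Lemma table_mid_neq0 : al *: e 3%N + ga *: e 2%N != 0.
Proof.
apply/negP => /eqP /(congr1 (br (e 1%N))).
rewrite (brDr brL) !(brZr brL) br1e2_table scaler0 addr0 (br0r brL) br1e_table; last lia.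
by move/eqP; rewrite (negPf table_low_neq0).
Qed.

Lemma table_z1 : z1_of br n e (n - 2).
Proof.
split.
  split; first lia.
  by rewrite br_table; try lia; table_cases; apply/eqP; exact: table_mid_neq0.
move=> k hk [hk2 hne]; apply: hne.
by rewrite br_table; try lia; table_cases.
Qed.

Lemma table_z2 : z2_of br n e (n - 2).
Proof.
split.
  split; first lia; split; first lia.
  rewrite (_ : (n - 2).+1 = n - 1)%N; last lia.
  by rewrite br_table; try lia; table_cases; apply/eqP; exact: table_low_neq0.
move=> k hk [hk2 [hkn hne]]; apply: hne.
by rewrite br_table; try lia; table_cases.
Qed.

Lemma table_has_triple : has_triple br (n - 2) (n - 2) n.
Proof.
split => //; [exact: table_filiform | exact: table_not_model |].
by exists e; split; [exact: table_adapted | exact: table_z1 | exact: table_z2].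
Qed.

End TableAlgebra.

Section RowAlgebra.
Variables (K : fieldType) (m : nat) (al ga be : K).
Local Notation n := m.+1.
Local Notation V := 'rV[K]_n.

(* 1-based coordinates, [0] outside [1..n] *)
Definition coef (v : V) (h : nat) : K := if (0 < h <= n)%N then v 0 (inord h.-1) else 0.
Arguments coef : simpl never.

Definition minor (x y : V) i j := coef x i * coef y j - coef x j * coef y i.

Definition row_br_coef (x y : V) (h : nat) : K :=
  (2 <= h < n)%N%:R * minor x y 1 h.+1
  + (h == 2)%N%:R * (be * minor x y (n - 1) n + ga * minor x y (n - 2) n
                     + al * minor x y (n - 2) (n - 1))
  + (h == 3)%N%:R * (ga * minor x y (n - 1) n + al * minor x y (n - 2) n)
  + (h == 4)%N%:R * (al * minor x y (n - 1) n).
Arguments row_br_coef : simpl never.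

Definition row_br (x y : V) : V := \row_(j < n) row_br_coef x y j.+1.
Definition row_e (k : nat) : V := \row_(j < n) (j.+1 == k)%N%:R.

Ltac decide_indicators := repeat match goal with
  | |- context [ nat_of_bool ?b ] =>
     lazymatch b with true => fail | false => fail | _ =>
       first [ have -> : b = true by lia | have -> : b = false by lia ] end
  end; rewrite ?[nat_of_bool true]/= ?[nat_of_bool false]/=.

Lemma coef0 h : coef 0 h = 0.
Proof. by rewrite /coef mxE; case: ifP. Qed.

Lemma coefD x y h : coef (x + y) h = coef x h + coef y h.
Proof. by rewrite /coef; case: ifP; rewrite ?mxE ?addr0. Qed.

Lemma coefZ a x h : coef (a *: x) h = a * coef x h.
Proof. by rewrite /coef; case: ifP; rewrite ?mxE ?mulr0. Qed.

Lemma coef_sum (r : seq nat) (G : nat -> V) h :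
  coef (\sum_(k <- r) G k) h = \sum_(k <- r) coef (G k) h.
Proof. exact: (big_morph (coef^~ h) (fun a b => coefD a b h) (coef0 h)). Qed.

Lemma coef_br x y h : coef (row_br x y) h = (0 < h <= n)%N%:R * row_br_coef x y h.
Proof.
rewrite /coef; case: ifP => hh; last by rewrite mul0r.
by rewrite mxE inordK ?prednK ?mul1r //; lia.
Qed.

Lemma coef_e k h : coef (row_e k) h = ((h == k) && (0 < h <= n))%N%:R.
Proof.
rewrite /coef; case: ifP => hh; last by rewrite andbF.
by rewrite mxE inordK ?prednK ?andbT //; lia.
Qed.

Lemma coef_inj v w : (forall h, (0 < h <= n)%N -> coef v h = coef w h) -> v = w.
Proof.
move=> vw; apply/rowP => j; have := vw j.+1.
by rewrite /coef /= ltn_ord inord_val => ->.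
Qed.

Lemma row_e_decomp v : v = \sum_(k <- iota 1 n) coef v k *: row_e k.
Proof.
apply: coef_inj => h hh; rewrite coef_sum.
under eq_bigr do rewrite coefZ coef_e.
rewrite (bigD1_seq h) ?iota_uniq ?mem_iota /=; try lia.
rewrite eqxx hh mulr1 big1 ?addr0 // => k hk.
by rewrite eq_sym (negPf hk) mulr0.
Qed.

Lemma row_e_basis : is_basis_n n row_e.
Proof.
rewrite /is_basis_n basisEdim size_map size_iota dimvf dim_matrix mul1r ltnSn andbT.
apply/subvP => v _; rewrite (row_e_decomp v) big_seq.
by apply: memv_suml => k hk; apply/memvZ/memv_span/map_f.
Qed.

Hypothesis n_ge6 : (6 <= n)%N.

Lemma row_br_jacobi_coef x y z h : (0 < h <= n)%N ->
  row_br_coef x (row_br y z) h + row_br_coef y (row_br z x) h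
  + row_br_coef z (row_br x y) h = 0.
Proof.
move=> hh; rewrite /row_br_coef /minor !coef_br /row_br_coef /minor.
have -> : (n - 1).+1 = n by lia.
have -> : (n - 2).+1 = (n - 1)%N by lia.
have [h_le4|h_ge5] := ltnP h 5.
  by case: h hh h_le4 => [|[|[|[|[|h]]]]] //= _ _; decide_indicators; ring.
by decide_indicators; ring.
Qed.

Lemma row_br_lie : is_lie_bracket row_br.
Proof.
split=> [a x y z | a x y z | x | x y z]; apply/rowP => j; rewrite !mxE;
  last exact: (row_br_jacobi_coef x y z (h := j.+1) (ltn_ord j)).
all: by rewrite /row_br_coef /minor ?coefD ?coefZ; ring.
Qed.

Lemma row_br_table a b : (1 <= a)%N -> (a < b)%N -> (b <= n)%N ->
  row_br (row_e a) (row_e b) = table n row_e al ga be a b.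
Proof.
move=> ha hab hb; apply: coef_inj => h hh.
rewrite coef_br /row_br_coef /minor !coef_e /table.
case: ifP => [?|?].
  rewrite coef_e; case: (h =P b.-1) => ?; first [exfalso; lia | decide_indicators; ring].
case: ifP => [?|?].
  have [-> ->] : a = (n - 2)%N /\ b = (n - 1)%N by lia.
  rewrite coefZ coef_e; case: (h =P 2%N) => ?; first [exfalso; lia | decide_indicators; ring].
case: ifP => [?|?].
  have [-> ->] : a = (n - 2)%N /\ b = n by lia.
  rewrite coefD !coefZ !coef_e; case: (h =P 2%N) => ?; case: (h =P 3%N) => ?;
    first [exfalso; lia | decide_indicators; ring].
case: ifP => [?|?].
  have [-> ->] : a = (n - 1)%N /\ b = n by lia.
  rewrite !coefD !coefZ !coef_e; case: (h =P 2%N) => ?; case: (h =P 3%N) => ?;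
    case: (h =P 4%N) => ?; first [exfalso; lia | decide_indicators; ring].
rewrite coef0; have [a1|?] := eqVneq a 1%N.
  by case: (h =P 1%N) => ?; first [exfalso; lia | decide_indicators; ring].
by first [exfalso; lia | decide_indicators; ring].
Qed.

End RowAlgebra.

Theorem mainTheorem3 (R : realType) (n : nat) (hn : (6 <= n)%N) :
  (forall (V : vectType R[i]) (br : V -> V -> V),
     has_triple br (n - 2) (n - 2) n ->
     exists (e : nat -> V) (al ga be : R[i]),
       [/\ adapted_basis br n e, al != 0 &
           forall a b, (1 <= a)%N -> (a < b)%N -> (b <= n)%N ->
             br (e a) (e b) = table n e al ga be a b])
  /\
  (forall al ga be : R[i], al != 0 ->
     exists (V : vectType R[i]) (br : V -> V -> V) (e : nat -> V),
       [/\ is_lie_bracket br, is_basis_n n e,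
           forall a b, (1 <= a)%N -> (a < b)%N -> (b <= n)%N ->
             br (e a) (e b) = table n e al ga be a b &
           has_triple br (n - 2) (n - 2) n]).
Proof.
split.
  move=> V br [brL _ _ [e [[e_basis br1e br2e br3e] [_ z1_least] [[_ [_ z2_neq0]] _]]]].
  have brn_low k : (4 <= k)%N -> (k < n - 2)%N -> br (e k) (e n) = 0.
    move=> hk hkn; apply/eqP; apply: contraT => /eqP br_neq0.
    by case: (z1_least k hkn); split; [lia |].
  have top_neq0 : br (e (n - 2)%N) (e (n - 1)%N) != 0.
    by apply/eqP; rewrite (_ : (n - 1 = (n - 2).+1)%N) //; lia.
  have [al [ga [be [al_neq0 br_table]]]] :=
    adapted_table brL hn e_basis br1e br2e br3e brn_low top_neq0.
  by exists e, al, ga, be; split.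
move=> al ga be al_neq0; case: n hn => [//|m] hn.
have brL := row_br_lie al ga be hn.
have e_basis := row_e_basis R[i] m.
have br_table := row_br_table al ga be hn.
exists 'rV[R[i]]_m.+1, (row_br al ga be), (row_e R[i] m); split => //.
exact: table_has_triple brL hn e_basis br_table al_neq0.
Qed.
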